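(* Let $n\ge2$ and, for $\mathbf w,\mathbf w'\in\mathcal{W}^n$ and $1\le j\le n-1$, let $\mathscr M_j(\mathbf w,\mathbf w')$ be the probability that a single Moran event transforms $\mathbf w$ into $\mathbf w'$ and that the dying leaf $u$ is a child of the internal node of rank $j$ in $\mathbf w$. Then $\mathscr M(\mathbf w,\mathbf w')=\sum_{j=1}^{n-1}\mathscr M_j(\mathbf w,\mathbf w')$, and for all $\mathbf w,\mathbf w'\in\mathcal W^n$ and $j$, \[ \sum_{\mathbf w\in\mathcal W^n}\mathscr M_j(\mathbf w,\mathbf w')=\frac{j}{\binom n2},\qquad \sum_{\mathbf w'\in\mathcal W^n}\mathscr M_j(\mathbf w,\mathbf w')=\frac{B_j(\mathbf w)}{n}, \] where $B_j(\mathbf w)$ is the number of leaves among the two children of the rank-$j$ internal node of $\mathbf w$.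
   Context: $\mathcal W^n$ is the set of ranked leaf-labelled rooted binary tree topologies with leaves $\{1,\dots,n\}$: binary trees with $n-1$ internal nodes totally ordered by rank $1,\dots,n-1$ (rank 1 is the root; each internal node has larger rank than its parent). A Moran event on $\mathbf w\in\mathcal W^n$: an ordered pair $(u,v)$ of distinct leaves is chosen uniformly at random among the $n(n-1)$ ordered pairs; leaf $u$ and its parent internal node are removed (the sibling of $u$ is reattached to the parent of the removed node, ranks of later nodes shifting down by one), and then a new internal node of rank $n-1$ is inserted on the edge above leaf $v$, with children $u$ and $v$. $\mathscr M(\mathbf w,\mathbf w')$ is the probability that a Moran event transforms $\mathbf w$ into $\mathbf w'$. *)

From mathcomp Require Import all_boot all_order all_algebra.
Set Implicit Arguments. Unset Strict Implicit. Unset Printing Implicit Defensive.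
Import GRing.Theory Num.Theory.

(* Nodes of a tree in W^n: leaves  inl l  (l : 'I_n, leaf label l+1) and
   internal nodes  inr k  (k : 'I_n.-1, internal node of rank k+1). *)
Definition node (n : nat) := ('I_n + 'I_n.-1)%type.

(* A ranked tree topology is encoded by its parent map (None for the root). *)
Definition wf_tree (n : nat) (f : {ffun node n -> option 'I_n.-1}) : bool :=
  [forall x : node n, (f x == None) ==
      (match x with inr i => val i == 0 | inl _ => false end)] &&
  [forall x : 'I_n.-1, forall y : 'I_n.-1, (f (inr y) == Some x) ==> (x < y)] &&
  [forall p : 'I_n.-1, #|[pred x : node n | f x == Some p]| == 2].

Definition W (n : nat) := {f : {ffun node n -> option 'I_n.-1} | wf_tree f}.

Definition par (n : nat) (w : W n) (x : node n) : option 'I_n.-1 := val w x.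

Definition parI (n : nat) (w : W n) (r : nat) : option nat :=
  oapp (fun k : 'I_n.-1 => omap val (par w (inr k))) None (insub r : option 'I_n.-1).

(* Result (as parent map with nat ranks, 0-indexed) of the Moran event in which
   leaf u dies and leaf v reproduces.  New internal node has rank n-1
   (0-indexed n-2). *)
Definition moran_raw (n : nat) (w : W n) (u v : 'I_n) : node n -> option nat :=
  match par w (inl u) with
  | None => fun _ => None
  | Some p =>
    let shift r := if r < val p then r else r.-1 in
    (* parent after removal of u and p, old node given by its old parent *)
    let reparent (op : option nat) :=
      omap shift (if op == Some (val p) then parI w (val p) else op) in
    fun y => match y with
    | inl l => if (l == u) || (l == v) then Some n.-2
               else reparent (omap val (par w (inl l)))
    | inr k => if val k == n.-2 then reparent (omap val (par w (inl v)))
               else reparent (parI w (if val k < val p then val k else (val k).+1))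
    end
  end.

Definition moran_pairs (n : nat) (w w' : W n) : {set 'I_n * 'I_n} :=
  [set uv : 'I_n * 'I_n | (uv.1 != uv.2) &&
     [forall x : node n, moran_raw w uv.1 uv.2 x == omap val (par w' x)]].

Definition Moran (n : nat) (w w' : W n) : rat :=
  (#|moran_pairs w w'|)%:R / (n * (n - 1))%:R.

(* j : 'I_n.-1 denotes the internal node of rank j+1 *)
Definition Moran_j (n : nat) (j : 'I_n.-1) (w w' : W n) : rat :=
  (#|[set uv in moran_pairs w w' | par w (inl uv.1) == Some j]|)%:R
    / (n * (n - 1))%:R.

Definition B (n : nat) (j : 'I_n.-1) (w : W n) : nat :=
  #|[set l : 'I_n | par w (inl l) == Some j]|.

(* Part (1) partitions the Moran pairs (u, v) according to the parent of the
   dying leaf u.  For part (3), from a fixed w every ordered pair u <> v yields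
   exactly one tree, so the sum over w' counts the pairs whose u is a leaf child
   of the rank-j node: B_j(w) (n - 1) of them.
   For part (2), an event producing w' with u a child of the rank-j node can be
   undone from u, v and the position taken in w' by the former sibling of u:
   u and v are the two leaf children of the last internal node of w', v is
   determined by u, and the sibling's position is one of the j branches of w'
   alive just above its rank-j node.  Hence
   sum_w M_j(w, w') <= 2 j / (n (n - 1)); summed over j and w' both sides give
   |W^n|, so every bound is attained. *)

From mathcomp Require Import all_boot all_order all_algebra.
From mathcomp Require Import zify.
Set Implicit Arguments. Unset Strict Implicit. Unset Printing Implicit Defensive.

Lemma eq_of_leq_sum (I : finType) (E1 E2 : I -> nat) :
  (forall i, E1 i <= E2 i) -> \sum_i E2 i <= \sum_i E1 i -> forall i, E1 i = E2 i.
Proof.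
move=> le12 ge21 i.
have [_] := leqif_sum (P := predT) (fun j _ => leqif_eq (le12 j)).
by rewrite eqn_leq ge21 leq_sum // => /esym/forallP/(_ i)/eqP.
Qed.

Lemma sum_mem_card (T : finType) (A : {pred T}) : \sum_x (x \in A : nat) = #|A|.
Proof. by rewrite -sum1_card [RHS]big_mkcond. Qed.

Lemma sum_card_pairs (A B : finType) (S : A -> {set B}) :
  \sum_a #|S a| = #|[set x : A * B | x.2 \in S x.1]|.
Proof.
rewrite -sum_mem_card; under eq_bigr do rewrite -sum_mem_card.
by rewrite pair_big /=; apply: eq_bigr => x _; rewrite inE.
Qed.

Lemma mul2_bin2 k : 2 * 'C(k, 2) = k * k.-1.
Proof. by rewrite bin2 mul2n even_halfK // oddM; case: k => //= k; rewrite andNb. Qed.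

Lemma sum_double_succ k : \sum_(j < k) 2 * j.+1 = k * k.+1.
Proof. by elim: k => [|k IH]; rewrite ?big_ord0 // big_ord_recr /= IH; lia. Qed.

Definition shift_rank (p r : nat) := if r < p then r else r.-1.
Definition unshift_rank (p r : nat) := if r < p then r else r.+1.

Lemma shift_rankK p r : r != p -> unshift_rank p (shift_rank p r) = r.
Proof.
rewrite /shift_rank /unshift_rank => /eqP rp.
by case: (ltnP r p) => [-> //|pr]; case: ifP => ?; lia.
Qed.

Lemma unshift_rankK p r : shift_rank p (unshift_rank p r) = r.
Proof.
rewrite /shift_rank /unshift_rank.
by case: (ltnP r p) => [-> //|pr]; case: ifP => ?; lia.
Qed.

Lemma unshift_rank_neq p r : unshift_rank p r != p.
Proof. by apply/eqP; rewrite /unshift_rank; case: ifP => ?; lia. Qed.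

Section RankedTrees.
Variable m : nat.
Local Notation N := m.+2.
Implicit Types (w : W N) (x : node N).

Definition parn w x : option nat := omap val (par w x).

Lemma parn_Some w x (q : 'I_m.+1) : (parn w x == Some (q : nat)) = (par w x == Some q).
Proof. by rewrite /parn; case: (par w x) => [a|] //=; rewrite !inj_eq //; exact: val_inj. Qed.

Lemma parn_None w x : (parn w x == None) = (x == inr ord0).
Proof.
case/andP: (valP w) => /andP [/forallP /(_ x) root _] _.
rewrite /parn /par; move: root; case: x => [l|k] /=; case: (val w _) => [a|] //=.
by move=> /eqP root; apply/esym/eqP => -[/(congr1 val) /= k0]; rewrite k0 in root.
Qed.

Lemma parn_lt w (k : 'I_m.+1) r : parn w (inr k) = Some r -> r < k.
Proof.
case/andP: (valP w) => /andP [_ /forallP dec] _.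
rewrite /parn /par; case E: (val w (inr k)) => [a|] //= [<-].
by have /forallP/(_ k)/implyP := dec a; apply; rewrite E.
Qed.

Lemma parn_le w x r : parn w x = Some r -> r <= m.
Proof. by rewrite /parn; case: (par w x) => [a|] //= [<-]; rewrite -ltnS. Qed.

Lemma card_children w (q : 'I_m.+1) : #|[pred x | parn w x == Some (q : nat)]| = 2.
Proof.
case/andP: (valP w) => _ /forallP /(_ q) /eqP <-.
by apply: eq_card => x; rewrite !inE parn_Some.
Qed.

Lemma parn_inj w1 w2 : parn w1 =1 parn w2 -> w1 = w2.
Proof.
move=> E; apply/val_inj/ffunP => x; move: (E x); rewrite /parn /par.
by case: (val w1 x) => [a|]; case: (val w2 x) => [b|] //= [/val_inj ->].
Qed.

Lemma parIE w r : r < m.+1 -> parI w r = parn w (inr (inord r)).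
Proof.
move=> lt_r; rewrite /parI insubT /= /parn.
by congr (omap _ (par _ (inr _))); apply: val_inj; rewrite /= inordK.
Qed.

Lemma leaf_par w l : exists p, par w (inl l) = Some p.
Proof.
case E: (par w (inl l)) => [p|]; first by exists p.
by have := parn_None w (inl l); rewrite /parn E.
Qed.

Definition sibling w x : node N := odflt x [pick y | (y != x) && (parn w y == parn w x)].

Lemma siblingP w x (p : 'I_m.+1) : parn w x = Some (p : nat) ->
  [/\ sibling w x != x, parn w (sibling w x) = Some (p : nat) &
      forall y, parn w y = Some (p : nat) -> y = x \/ y = sibling w x].
Proof.
move=> px; have /cards2P [c1 [c2 [c12 C]]] : #|[set y | parn w y == Some (p : nat)]| == 2.
  by rewrite cardsE card_children.
have inC y : parn w y = Some (p : nat) <-> y = c1 \/ y = c2.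
  have E : (parn w y == Some (p : nat)) = (y \in [set c1; c2]) by rewrite -C inE.
  rewrite !inE in E; split => [/eqP|yc]; first by rewrite E => /orP [] /eqP; auto.
  by apply/eqP; rewrite E; case: yc => ->; rewrite eqxx ?orbT.
have [s [sx ps other]] : exists s, [/\ s != x, parn w s = Some (p : nat) &
    forall y, parn w y = Some (p : nat) -> y = x \/ y = s].
  case: (iffLR (inC x) px) => ->.
  - exists c2; split; [by rewrite eq_sym | by apply/inC; right |].
    by move=> y /inC.
  - exists c1; split; [by [] | by apply/inC; left |].
    by move=> y /inC [] ->; auto.
suff -> : sibling w x = s by [].
rewrite /sibling; case: pickP => [y /andP [yx /eqP py]|none] /=.
- by rewrite px in py; case: (other _ py) => // yx'; rewrite yx' eqxx in yx.
- by have := none s; rewrite sx ps px eqxx.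
Qed.

Lemma card_node : #|{: node N}| = 2 * m + 3.
Proof. by rewrite card_sum !card_ord; lia. Qed.

(* As #|node N| = 1 + 2 (m + 1), one root and two children per internal node
   account for every node. *)
Lemma wf_tree_from_children (f : {ffun node N -> option 'I_m.+1}) :
  f (inr ord0) = None ->
  (forall (k q : 'I_m.+1), f (inr k) = Some q -> q < k) ->
  (forall q, 2 <= #|[pred x | f x == Some q]|) -> wf_tree f.
Proof.
move=> root dec ge2.
pose roots := #|[pred x | f x == None]|.
have ge1 : 1 <= roots by rewrite lt0n; apply/existsP; exists (inr ord0); rewrite /= root.
have total : roots + \sum_q #|[pred x | f x == Some q]| = 2 * m + 3.
  have <- : \sum_(x : node N) 1 = 2 * m + 3 by rewrite sum1_card card_node.
  rewrite (eq_bigr (fun x => (f x == None) + \sum_q (f x == Some q) : nat)); last first.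
    move=> x _; case: (f x) => [a|] /=; last by rewrite big1.
    rewrite (bigD1 a) //= eqxx big1 // => q qa.
    by case: eqP => // -[aq]; rewrite aq eqxx in qa.
  rewrite big_split /= exchange_big /= sum_mem_card.
  by congr (_ + _); apply: eq_bigr => q _; rewrite sum_mem_card.
have two q : #|[pred x | f x == Some q]| = 2.
  apply/esym; apply: (eq_of_leq_sum ge2).
  rewrite big_const_ord iter_addn_0 -(leq_add2l roots) total.
  by clearbody roots; lia.
have one_root : roots = 1.
  move: total; rewrite (eq_bigr _ (fun q _ => two q)) big_const_ord iter_addn_0.
  by clearbody roots; lia.
apply/andP; split; last by apply/forallP => q; rewrite two.
apply/andP; split.
- apply/forallP => x; case: (eqVneq x (inr ord0)) => [->|x0]; first by rewrite root.
  have fx : f x != None.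
    apply/eqP => fx; move: one_root.
    by rewrite /roots (cardD1 (inr ord0)) (cardD1 x) !inE /= root fx x0 eqxx; lia.
  by rewrite (negbTE fx); case: x x0 {fx} => //= k; rewrite -val_eqE /= => /negbTE ->.
- by apply/forallP => q; apply/forallP => k; apply/implyP => /eqP; exact: dec.
Qed.

(* The node of the new tree occupying the parent edge of x; the new internal
   node (rank n - 1) takes over the edge of leaf v. *)
Definition moran_node (v : 'I_N) (p : nat) (x : node N) : node N :=
  match x with
  | inl l => if l == v then inr ord_max else inl l
  | inr k => inr (inord (shift_rank p k))
  end.

Lemma shift_rank_lt (k p : 'I_m.+1) : k != p -> shift_rank p k < m.
Proof.
rewrite -val_eqE /= /shift_rank => /eqP kp.
by have := ltn_ord k; have := ltn_ord p; case: ifP; lia.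
Qed.

Lemma moran_node_inj v (p : 'I_m.+1) : {in [pred x | x != inr p] &, injective (moran_node v p)}.
Proof.
have val_shift (k : 'I_m.+1) : k != p -> (inord (shift_rank p k) : 'I_m.+1) = shift_rank p k :> nat.
  by move=> kp; rewrite inordK // ltnS ltnW // shift_rank_lt.
move=> [a|b] [c|d]; rewrite !inE /= => xp yp.
- by case: eqP => [->|_]; case: eqP => [->|_] // [->].
- have dp : d != p := yp.
  case: eqP => _ // [] /(congr1 val) /=; rewrite val_shift // => E.
  by have := shift_rank_lt dp; rewrite -E ltnn.
- have bp : b != p := xp.
  case: eqP => _ // [] /(congr1 val) /=; rewrite val_shift // => E.
  by have := shift_rank_lt bp; rewrite E ltnn.
- have bp : b != p := xp; have dp : d != p := yp.
  move=> [] /(congr1 val); rewrite /= !val_shift // => E.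
  by congr inr; apply: val_inj; rewrite /= -(shift_rankK bp) E shift_rankK.
Qed.

(* The [reparent] of [moran_raw]: new parent rank of a node whose old parent
   rank is [op]; the sibling of u inherits the parent of the removed node p. *)
Definition reparent (w : W N) (p : 'I_m.+1) (op : option nat) : option nat :=
  omap (shift_rank p) (if op == Some (p : nat) then parn w (inr p) else op).

(* Inverse of the event: the parent map of w, read off the new parent map f
   and the data u, v, p and the sibling s of u. *)
Definition unmoran (f : node N -> option nat) (u v : 'I_N) (p : 'I_m.+1) (s x : node N) :=
  if (x == inl u) || (x == s) then Some (p : nat)
  else if x == inr p then f (moran_node v p s)
  else omap (unshift_rank p) (f (moran_node v p x)).

Section Reparent.
Variables (w : W N) (p : 'I_m.+1).

Lemma reparent_p : reparent w p (Some (p : nat)) = parn w (inr p).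
Proof.
rewrite /reparent eqxx; case E: (parn w (inr p)) => [r|] //=.
by rewrite /shift_rank (parn_lt E).
Qed.

Lemma reparent_neq (r : nat) : r != p -> reparent w p (Some r) = Some (shift_rank p r).
Proof. by move=> rp; rewrite /reparent (inj_eq Some_inj) (negbTE rp). Qed.

Lemma reparent_lt x r : reparent w p (parn w x) = Some r -> r < m.
Proof.
case E: (parn w x) => [a|] //; case: (eqVneq a p) => [->|ap].
- by rewrite reparent_p => /parn_lt; have := ltn_ord p; lia.
- rewrite reparent_neq // => -[<-]; have := parn_le E; move/eqP: ap.
  have := ltn_ord p; rewrite /shift_rank; case: ifP; lia.
Qed.

Lemma reparent_inr_lt (k : 'I_m.+1) r : k != p ->
  reparent w p (parn w (inr k)) = Some r -> r < shift_rank p k.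
Proof.
move=> kp; have /eqP {}kp : (k : nat) != p := kp.
case E: (parn w (inr k)) => [a|] //; have ak := parn_lt E.
case: (eqVneq a p) => [ap|ap].
- rewrite ap reparent_p => /parn_lt; rewrite ap /shift_rank in ak *.
  by case: ifP; lia.
- rewrite reparent_neq // => -[<-]; move/eqP: ap.
  by rewrite /shift_rank; do 2 case: ifP; lia.
Qed.

End Reparent.

Section Event.
Variables (w : W N) (u v : 'I_N) (p : 'I_m.+1).
Hypothesis up : par w (inl u) = Some p.
Local Notation T := (moran_raw w u v).
Local Notation s := (sibling w (inl u)).

Lemma moran_rawE y : T y = match y with
  | inl l => if (l == u) || (l == v) then Some m else reparent w p (parn w (inl l))
  | inr k => if (k : nat) == m then reparent w p (parn w (inl v))
             else reparent w p (parn w (inr (inord (unshift_rank p k))))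
  end.
Proof.
have parIp : parI w p = parn w (inr p).
  by rewrite parIE //; congr (parn w (inr _)); apply: val_inj; rewrite /= inordK.
rewrite /moran_raw up /reparent parIp; case: y => [//|k].
case: eqP => // /= km; rewrite parIE //.
by have := ltn_ord k; rewrite /unshift_rank /=; case: ifP; lia.
Qed.

Lemma parn_u : parn w (inl u) = Some (p : nat).
Proof. by rewrite /parn up. Qed.

Lemma sibling_uP : [/\ s != inl u, parn w s = Some (p : nat) &
  forall y, parn w y = Some (p : nat) -> y = inl u \/ y = s].
Proof. exact: siblingP parn_u. Qed.

Lemma sibling_neq_p : s != inr p.
Proof.
case: sibling_uP => _ ps _; apply/eqP => sp.
by move: ps; rewrite sp => /parn_lt; rewrite ltnn.
Qed.

Lemma moran_raw_node x : x != inl u -> x != inr p ->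
  T (moran_node v p x) = reparent w p (parn w x).
Proof.
case: x => [l|k] xu xp; rewrite moran_rawE /=.
- case: (eqVneq l v) => [->|lv]; first by rewrite eqxx.
  have lu : l != u by apply: contra xu => /eqP ->.
  by rewrite (negbTE lu) (negbTE lv).
- have kp : k != p := xp; have kp' : (k : nat) != p := xp.
  have sk := shift_rank_lt kp.
  rewrite inordK; last by rewrite ltnS ltnW.
  by rewrite (ltn_eqF sk) shift_rankK // inord_val.
Qed.

Lemma moran_raw_le y r : T y = Some r -> r <= m.
Proof.
rewrite moran_rawE; case: y => [l|k]; case: ifP => _; first by case=> <-.
all: by move/reparent_lt/ltnW.
Qed.

Lemma moran_raw_lt (k : 'I_m.+1) r : T (inr k) = Some r -> r < k.
Proof.
rewrite moran_rawE /=; case: eqP => [-> /reparent_lt //|km].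
have lt_k : unshift_rank p k < m.+1.
  by have := ltn_ord k; rewrite /unshift_rank; case: ifP; lia.
move/reparent_inr_lt; rewrite inordK //.
by rewrite unshift_rankK; apply; rewrite -val_eqE /= inordK // unshift_rank_neq.
Qed.

(* The node of the new tree hanging where c hung in w; the removed node p is
   replaced by the former sibling of u. *)
Let lift c := moran_node v p (if c == inr p then s else c).

Lemma lift_inj : {in [pred c | parn w c != Some (p : nat)] &, injective lift}.
Proof.
case: sibling_uP => _ ps _.
have lift_p c : (if c == inr p then s else c) != inr p.
  by case: (eqVneq c (inr p)) => // _; exact: sibling_neq_p.
move=> c1 c2; rewrite !inE => c1p c2p /(moran_node_inj (lift_p c1) (lift_p c2)).
case: eqP => [->|_]; case: eqP => [->|_] // E.
- by move: c2p; rewrite -E ps eqxx.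
- by move: c1p; rewrite E ps eqxx.
Qed.

Lemma moran_raw_lift q c : parn w c = Some (unshift_rank p q) -> T (lift c) = Some q.
Proof.
case: sibling_uP => su ps _ pc; rewrite /lift.
have cu : c != inl u.
  apply/eqP => cu; move: pc; rewrite cu parn_u => -[] /esym/eqP.
  by rewrite (negbTE (unshift_rank_neq p q)).
case: eqP => [cp|/eqP cp].
- rewrite moran_raw_node ?sibling_neq_p // ps reparent_p -cp pc.
  have := parn_lt (etrans (congr1 _ (esym cp)) pc); rewrite /unshift_rank.
  by case: ifP => // qp lt_p; exfalso; lia.
- by rewrite moran_raw_node // pc reparent_neq ?unshift_rank_neq // unshift_rankK.
Qed.

Lemma moran_raw_children (uv : u != v) (q : 'I_m.+1) : 1 < #|[pred y | T y == Some (q : nat)]|.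
Proof.
apply/card_gt1P; case: (eqVneq (q : nat) m) => [qm|qm].
  by exists (inl u), (inl v); rewrite !inE !moran_rawE !eqxx orbT qm; split.
have lt_q : unshift_rank p q < m.+1.
  by have := ltn_ord q; move/eqP: qm; rewrite /unshift_rank; case: ifP; lia.
have /card_gt1P [c1 [c2 []]] : 1 < #|[pred c | parn w c == Some (unshift_rank p q)]|.
  by have := card_children w (inord (unshift_rank p q)); rewrite inordK // => ->.
rewrite !inE => /eqP c1q /eqP c2q c12.
have cp c : parn w c = Some (unshift_rank p q) -> parn w c != Some (p : nat).
  by move=> ->; rewrite (inj_eq Some_inj) unshift_rank_neq.
exists (lift c1), (lift c2); rewrite !inE !(moran_raw_lift (q := q)) //; split => //.
by apply: contra c12 => /eqP/lift_inj E; apply/eqP/E; rewrite inE cp.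
Qed.

Lemma moran_tree_exists : u != v -> exists w' : W N, T =1 parn w'.
Proof.
move=> uv; pose f := [ffun y => omap (@inord m) (T y)] : {ffun node N -> option 'I_m.+1}.
have fT y : omap val (f y) = T y.
  rewrite ffunE; case E: (T y) => [r|] //=.
  by rewrite inordK // ltnS (moran_raw_le E).
have fE y (q : 'I_m.+1) : (f y == Some q) = (T y == Some (q : nat)).
  by rewrite -fT; case: (f y) => [a|] //=; rewrite !(inj_eq Some_inj).
have wf : wf_tree f.
  apply: wf_tree_from_children.
  - by case E: (f _) => [a|] //; move: (fT (inr ord0)); rewrite E => /esym/moran_raw_lt.
  - by move=> k q /(congr1 (omap val)); rewrite fT => /moran_raw_lt.
  - by move=> q; rewrite (eq_card (fun y => fE y q)); exact: (moran_raw_children uv).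
by exists (exist _ f wf) => y; rewrite /parn /par /= fT.
Qed.

Lemma moran_rawK : parn w =1 unmoran T u v p s.
Proof.
case: sibling_uP => su ps uniq_child x; rewrite /unmoran.
case: (eqVneq x (inl u)) => [->|xu]; first exact: parn_u.
case: (eqVneq x s) => [->|xs] /=; first exact: ps.
case: (eqVneq x (inr p)) => [->|xp].
  by rewrite moran_raw_node ?sibling_neq_p // ps reparent_p.
rewrite moran_raw_node //; case E: (parn w x) => [a|] //.
have ap : a != p.
  apply/eqP => ap; move: E; rewrite ap => /uniq_child [] /eqP.
  - by rewrite (negbTE xu).
  - by rewrite (negbTE xs).
by rewrite reparent_neq //= shift_rankK.
Qed.

End Event.

Lemma moran_pairsP (w w' : W N) (u v : 'I_N) :
  reflect (u != v /\ moran_raw w u v =1 parn w') ((u, v) \in moran_pairs w w').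
Proof.
rewrite inE /=; apply: (iffP andP) => [[uv /forallP T]|[uv T]]; split => //.
- by move=> y; apply/eqP; apply: T.
- by apply/forallP => y; rewrite T.
Qed.

Lemma card_parent_lt (w : W N) (j : 'I_m.+1) :
  #|[set y : node N | if parn w y is Some r then r < j else true]| <= 1 + 2 * j.
Proof.
have j_le : j <= m.+1 := ltnW (ltn_ord j).
rewrite -sum_mem_card.
apply: (@leq_trans (\sum_y ((parn w y == None) + \sum_(r < j) (parn w y == Some (r : nat)) : nat))).
  apply: leq_sum => y _; rewrite inE; case: (parn w y) => [a|] //.
  by case: (ltnP a j) => aj //; rewrite (bigD1 (Ordinal aj)) //= eqxx; lia.
rewrite big_split /= exchange_big /= (eq_bigr (fun y => (y \in pred1 (inr ord0)) : nat)).
  rewrite sum_mem_card card1 leq_add2l (eq_bigr (fun=> 2)) ?big_const_ord ?iter_addn_0 //.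
  by move=> r _; rewrite -(card_children w (widen_ord j_le r)) -sum_mem_card.
by move=> y _; rewrite inE parn_None.
Qed.

(* Branches alive just above the internal node of 0-based rank j, each
   represented by its lower end. *)
Definition lineages (w : W N) (j : nat) : {set node N} :=
  [set y | (if parn w y is Some r then r < j else true) && (if y is inr k then j <= k else true)].

Lemma card_lineages (w : W N) (j : 'I_m.+1) : #|lineages w j| <= j.+1.
Proof.
pose D := [set y : node N | if parn w y is Some r then r < j else true].
pose I := [set y : node N | if y is inr k then k < j else false].
have LD : lineages w j \subset D :\: I.
  apply/subsetP => y; rewrite !inE => /andP [-> ].
  by case: y => [//|k] /= jk; rewrite andbT -leqNgt.
have ID : I \subset D.
  apply/subsetP => y; rewrite !inE; case: y => [//|k] /= kj.
  by case E: (parn w (inr k)) => [r|] //; have := parn_lt E; lia.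
have j_le : j <= m.+1 := ltnW (ltn_ord j).
have cI : j <= #|I|.
  pose widen_inr (k : 'I_j) : node N := inr (widen_ord j_le k).
  have widen_inr_inj : injective widen_inr by move=> a b; rewrite /widen_inr => -[] /val_inj.
  rewrite -[X in X <= _]card_ord -(card_imset _ widen_inr_inj).
  by apply: subset_leq_card; apply/subsetP => y /imsetP [k _ ->]; rewrite inE /=.
have cD : #|D| <= 1 + 2 * j := card_parent_lt w j.
have := subset_leq_card LD; rewrite cardsD (setIidPr ID).
by move: cI cD; move: #|lineages w j| #|D| #|I| (j : nat) => a b c d; lia.
Qed.

Definition moran_pairs_at (w w' : W N) (j : 'I_m.+1) : {set 'I_N * 'I_N} :=
  [set uv in moran_pairs w w' | par w (inl uv.1) == Some j].

Lemma moran_preimage_unique (w' w1 w2 : W N) (j : 'I_m.+1) (u v1 v2 : 'I_N) :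
    (u, v1) \in moran_pairs w1 w' -> (u, v2) \in moran_pairs w2 w' ->
    par w1 (inl u) = Some j -> par w2 (inl u) = Some j ->
    moran_node v1 j (sibling w1 (inl u)) = moran_node v2 j (sibling w2 (inl u)) ->
  w1 = w2 /\ v1 = v2.
Proof.
move=> /moran_pairsP [uv1 T1] /moran_pairsP [uv2 T2] j1 j2 E.
have v12 : v1 = v2.
  have := T1 (inl v1); rewrite (moran_rawE v1 j1) eqxx orbT -T2 (moran_rawE v2 j2).
  case: ifP => [/orP [] /eqP // vu|_ /esym /reparent_lt]; last by rewrite ltnn.
  by rewrite vu eqxx in uv1.
subst v2; split => //.
have Es : sibling w1 (inl u) = sibling w2 (inl u).
  by apply: (moran_node_inj _ _ E); rewrite inE sibling_neq_p.
apply: parn_inj => x; rewrite (moran_rawK v1 j1) (moran_rawK v1 j2) Es.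
by rewrite /unmoran !T1 !T2.
Qed.

Lemma moran_sibling_lineage (w w' : W N) (j : 'I_m.+1) (u v : 'I_N) :
    (u, v) \in moran_pairs w w' -> par w (inl u) = Some j ->
  moran_node v j (sibling w (inl u)) \in lineages w' j.
Proof.
move=> /moran_pairsP [_ T] uj; have [su sj _] := sibling_uP uj.
rewrite inE -T moran_raw_node ?sibling_neq_p // sj reparent_p.
apply/andP; split; first by case E: (parn w (inr j)) => [r|] //; exact: parn_lt E.
case: (sibling w (inl u)) sj => [l|k] /= kj; first by case: eqP => //= _; rewrite -ltnS.
move: (parn_lt kj) (ltn_ord k) => /= jk ltk; rewrite inordK /shift_rank; case: ifP; lia.
Qed.

Lemma card_leaf_children (w : W N) (q : 'I_m.+1) :
  #|[set l | parn w (inl l) == Some (q : nat)]| <= 2.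
Proof.
have inl_inj : injective (@inl 'I_N 'I_m.+1) by move=> a b [].
rewrite -(card_children w q) -(card_imset _ inl_inj).
by apply: subset_leq_card; apply/subsetP => x /imsetP [l]; rewrite inE => lq ->.
Qed.

(* An event of the fiber is determined by u, a leaf child of the last internal
   node of w', and by the lineage of w' now occupied by the sibling of u. *)
Lemma card_moran_fiber (w' : W N) (j : 'I_m.+1) :
  \sum_w #|moran_pairs_at w w' j| <= 2 * j.+1.
Proof.
rewrite sum_card_pairs; set F := [set e | _].
pose phi (e : W N * ('I_N * 'I_N)) := (e.2.1, moran_node e.2.2 j (sibling e.1 (inl e.2.1))).
have inF e : e \in F -> (e.2.1, e.2.2) \in moran_pairs e.1 w' /\ par e.1 (inl e.2.1) = Some j.
  by case: e => w [u v]; rewrite !inE /= => /andP [-> /eqP].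
have phi_inj : {in F &, injective phi}.
  move=> [w1 [u1 v1]] [w2 [u2 v2]] /inF [/= T1 j1] /inF [/= T2 j2] [/= u12].
  subst u2 => /(moran_preimage_unique T1 T2 j1 j2) [-> ->] //.
have phiF : phi @: F \subset setX [set l | parn w' (inl l) == Some m] (lineages w' j).
  apply/subsetP => _ /imsetP [[w [u v]] /inF [/= T uj] ->].
  rewrite in_setX /= (moran_sibling_lineage T uj) andbT inE.
  by case/moran_pairsP: T => _ <-; rewrite (moran_rawE v uj) eqxx.
rewrite -(card_in_imset phi_inj); apply: leq_trans (subset_leq_card phiF) _.
by rewrite cardsX leq_mul // ?card_lineages // (card_leaf_children w' ord_max).
Qed.

Lemma card_partition_parent (w : W N) (S : {set 'I_N * 'I_N}) :
  #|S| = \sum_(j : 'I_m.+1) #|[set uv in S | par w (inl uv.1) == Some j]|.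
Proof.
rewrite -sum_mem_card; under [RHS]eq_bigr do rewrite -sum_mem_card.
rewrite exchange_big; apply: eq_bigr => uv _ /=; have [p up] := leaf_par w uv.1.
rewrite (bigD1 p) //= !inE up eqxx andbT big1 ?addn0 // => q qp.
by rewrite inE up; case: (uv \in S) => //=; case: eqP => // -[pq]; rewrite pq eqxx in qp.
Qed.

Lemma sum_moran_pairs (w : W N) (Q : pred ('I_N * 'I_N)) :
  \sum_w' #|[set uv in moran_pairs w w' | Q uv]| = #|[set uv | (uv.1 != uv.2) && Q uv]|.
Proof.
under eq_bigr do rewrite -sum_mem_card.
rewrite exchange_big -sum_mem_card; apply: eq_bigr => -[u v] _ /=; rewrite inE /=.
case: (eqVneq u v) => [<-|uv] /=.
  by rewrite big1 // => w' _; rewrite !inE /= eqxx.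
case Quv: (Q (u, v)) => /=; last by rewrite big1 // => w' _; rewrite inE Quv andbF.
have [p up] := leaf_par w u; have [w0 T0] := moran_tree_exists up uv.
rewrite (bigD1 w0) //= big1 ?addn0 => [|w' w'0].
  by rewrite inE Quv andbT (introT (moran_pairsP _ _ _ _) (conj uv T0)).
rewrite inE Quv andbT; case: moran_pairsP => // -[_ T']; exfalso.
by move/eqP: w'0; apply; apply: parn_inj => y; rewrite -T' T0.
Qed.

Lemma card_offdiag (Q : pred 'I_N) :
  #|[set uv : 'I_N * 'I_N | (uv.1 != uv.2) && Q uv.1]| = #|Q| * m.+1.
Proof.
set X := [set uv | _]; rewrite -sum_mem_card.
have -> : \sum_uv (uv \in X : nat) = \sum_u \sum_v ((u, v) \in X : nat).
  by rewrite pair_bigA; apply: eq_bigr => -[].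
rewrite -sum_mem_card big_distrl /=; apply: eq_bigr => u _.
under eq_bigr do rewrite inE /=.
have -> : (u \in Q) = Q u by [].
case: (Q u); last by rewrite mul0n big1 // => v _; rewrite andbF.
rewrite mul1n (eq_bigr (fun v => (v \in predC1 u) : nat)) => [|v _].
  by rewrite sum_mem_card cardC1 card_ord.
by rewrite andbT inE eq_sym.
Qed.

(* The bounds of [card_moran_fiber] add up, over j and w', to the total number
   |W| n (n - 1) of Moran events, so they are all attained. *)
Lemma sum_moran_pairs_at (w' : W N) (j : 'I_m.+1) :
  \sum_w #|moran_pairs_at w w' j| = 2 * j.+1.
Proof.
pose a w' j := \sum_w #|moran_pairs_at w w' j|.
have total : \sum_(t : W N) \sum_(i < m.+1) 2 * i.+1 = \sum_t \sum_i a t i.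
  transitivity (\sum_(w : W N) \sum_(t : W N) #|moran_pairs w t|); last first.
    rewrite exchange_big; apply: eq_bigr => t _; rewrite /a exchange_big.
    by apply: eq_bigr => w _; apply: card_partition_parent.
  apply: eq_bigr => w _; rewrite sum_double_succ.
  have E t : moran_pairs w t = [set uv in moran_pairs w t | xpredT uv].
    by apply/setP => uv; rewrite inE andbT.
  under eq_bigr do rewrite E.
  by rewrite sum_moran_pairs (card_offdiag xpredT) cardT size_enum_ord mulnC.
have row t : \sum_i a t i = \sum_(i < m.+1) 2 * i.+1.
  apply: (eq_of_leq_sum _ (eq_leq total)) => {}t.
  by apply: leq_sum => i _; apply: card_moran_fiber.
exact: (eq_of_leq_sum (card_moran_fiber w') (eq_leq (esym (row w')))).
Qed.

End RankedTrees.

Import GRing.Theory Num.Theory.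
Local Open Scope ring_scope.

Theorem proposition2 (n : nat) (hn : (2 <= n)%N) :
  (forall w w' : W n, Moran w w' = \sum_(j < n.-1) Moran_j j w w') /\
  (forall (j : 'I_n.-1) (w' : W n),
      \sum_(w : W n) Moran_j j w w' = (j.+1)%:R / ('C(n, 2))%:R) /\
  (forall (j : 'I_n.-1) (w : W n),
      \sum_(w' : W n) Moran_j j w w' = (B j w)%:R / n%:R).
Proof.
case: n hn => [|[|m]] // _.
have pairsE : (m.+2 * (m.+2 - 1) = 2 * 'C(m.+2, 2))%N by rewrite mul2_bin2 subn1.
split; [|split] => [w w'|j w'|j w]; rewrite /Moran /Moran_j -mulr_suml -natr_sum.
- by rewrite (card_partition_parent w).
- by rewrite (sum_moran_pairs_at w' j) pairsE !natrM -mulf_div divff ?mul1r.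
- rewrite (sum_moran_pairs w (fun uv => par w (inl uv.1) == Some j)).
  rewrite (card_offdiag (fun u => par w (inl u) == Some j)) subn1 /B !natrM.
  rewrite -mulf_div divff ?mulr1 ?pnatr_eq0 //.
  by congr (_%:R / _); apply: eq_card => x; rewrite inE.
Qed.
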